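(* Let $n\ge3$, let $p:[\mathcal Q:\xi]\to[\mathcal H:\partial]$ be a trivial fibration and $f:[\mathcal Q:\xi]\to[\mathcal G:\delta]$ a morphism of reduced $n$-crossed complexes, and let $\nabla^f=(p,f):\mathcal Q\to\mathcal H\times\mathcal G$. Then the composite $\pi_1\circ\rho:\mathcal Q^{\nabla^f_n}\to\mathcal H\times\mathcal G\to\mathcal H$ (where $\pi_1$ is the projection) is a trivial fibration.
   Context: A reduced $n$-crossed complex $[C:\partial]$ is a sequence of groups and homomorphisms $C_n\xrightarrow{\partial_n}C_{n-1}\to\cdots\to C_2\xrightarrow{\partial_2}C_1$ together with an action of $C_1$ on each $C_k$ ($k\ge2$), such that $\partial_2:C_2\to C_1$ is a crossed module, $C_k$ is abelian for $k\ge3$, each $\partial_k$ is $C_1$-equivariant, $\partial_{k-1}\partial_k$ is trivial, and $\partial_2(C_2)$ acts trivially on $C_k$ for $k\ge3$. Morphisms are families of homomorphisms commuting with differentials and actions; products are degreewise. Homotopy groups: $\pi_1(C)=C_1/\partial_2(C_2)$, $\pi_k(C)=\ker\partial_k/\partial_{k+1}(C_{k+1})$ for $2\le k\le n-1$, $\pi_n(C)=\ker\partial_n$. A weak equivalence induces isomorphisms on all $\pi_k$, $1\le k\le n$; a fibration is surjective in every degree; a trivial fibration is both. The $n$-pushout: given $\nabla:[\mathcal Q:\xi]\to[\mathcal K:\kappa]$ (here $\mathcal K=\mathcal H\times\mathcal G$, $\nabla=(p,f)$), $\mathcal Q^{\nabla_n}$ equals $\mathcal Q$ in degrees $\le n-2$,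 has degree $n$ group $\mathcal K_n$ and degree $n-1$ group $P=\mathcal Q_{n-1}\times^{\mathcal Q_n}\mathcal K_n$, the quotient of the (semi)direct product $\mathcal Q_{n-1}\ltimes\mathcal K_n$ (for $n=3$, $\mathcal Q_2$ acts on $\mathcal K_3$ via $\nabla_1\circ\xi_2$; for $n\ge4$ the product is direct) by the normal subgroup of elements $(\xi_n(x)^{-1},\nabla_n(x))$, $x\in\mathcal Q_n$; elements are written $[a,(b,c)]$. Differentials: $(b,c)\mapsto[1,(b,c)]$ and $[a,(b,c)]\mapsto\xi_{n-1}(a)$. The canonical morphism $\rho:\mathcal Q^{\nabla_n}\to\mathcal K$ is the identity in degree $n$, $[a,(b,c)]\mapsto\nabla_{n-1}(a)\kappa_n(b,c)$ in degree $n-1$, and $\nabla_k$ in degrees $\le n-2$; the canonical $\iota:\mathcal Q\to\mathcal Q^{\nabla_n}$ is $\nabla_n$ in degree $n$, $a\mapsto[a,(1,1)]$ in degree $n-1$, identity below, and $\rho\circ\iota=\nabla$. *)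

From Stdlib Require Import Arith ClassicalEpsilon.


Record RawGrp := mkRawGrp {
  carrier :> Type;
  gmul : carrier -> carrier -> carrier;
  gone : carrier;
  ginv : carrier -> carrier }.

Arguments gmul {r} _ _.
Arguments gone {r}.
Arguments ginv {r} _.

Definition is_group (G : RawGrp) : Prop :=
  (forall x y z : G, gmul x (gmul y z) = gmul (gmul x y) z) /\
  (forall x : G, gmul gone x = x) /\
  (forall x : G, gmul x gone = x) /\
  (forall x : G, gmul (ginv x) x = gone) /\
  (forall x : G, gmul x (ginv x) = gone).

Definition is_abelian (G : RawGrp) : Prop := forall x y : G, gmul x y = gmul y x.

Definition is_hom (G H : RawGrp) (f : G -> H) : Prop :=
  forall x y : G, f (gmul x y) = gmul (f x) (f y).

Arguments is_hom {G H} f.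

Definition prodGrp (A B : RawGrp) : RawGrp :=
  @mkRawGrp (carrier A * carrier B)%type
    (fun x y => (gmul (fst x) (fst y), gmul (snd x) (snd y)))
    (gone, gone)
    (fun x => (ginv (fst x), ginv (snd x))).

(* semidirect product A |x B with A acting on B (on the left) via phi:
   (a,b)(a',b') = (a a', b (a.b')) *)
Definition semidirect (A B : RawGrp) (phi : A -> B -> B) : RawGrp :=
  @mkRawGrp (carrier A * carrier B)%type
    (fun x y => (gmul (fst x) (fst y), gmul (snd x) (phi (fst x) (snd y))))
    (gone, gone)
    (fun x => (ginv (fst x), phi (ginv (fst x)) (ginv (snd x)))).

(* quotient of G by (the normal subgroup given by) the predicate N:
   elements are the classes  x N = { y | x^-1 y \in N } *)
Definition qcls (G : RawGrp) (N : G -> Prop) (x : G) : G -> Prop :=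
  fun y => N (gmul (ginv x) y).

Arguments qcls {G} N x _.

Definition qcarrier (G : RawGrp) (N : G -> Prop) : Type :=
  { P : G -> Prop | exists x : G, P = qcls N x }.

Arguments qcarrier {G} N.

Definition qclass (G : RawGrp) (N : G -> Prop) (x : G) : qcarrier N :=
  exist _ (qcls N x) (ex_intro _ x eq_refl).

Arguments qclass {G} N x.

Definition qrep (G : RawGrp) (N : G -> Prop) (P : qcarrier N) : G :=
  proj1_sig (constructive_indefinite_description _ (proj2_sig P)).

Arguments qrep {G} {N} P.

Definition quotGrp (G : RawGrp) (N : G -> Prop) : RawGrp :=
  @mkRawGrp (qcarrier N)
    (fun P P' => qclass N (gmul (qrep P) (qrep P')))
    (qclass N gone)
    (fun P => qclass N (ginv (qrep P))).

(* ---------- raw reduced crossed complexes ----------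
   grp k = C_k ;  bd k : C_(k+1) -> C_k  is the differential  ∂_(k+1) ;
   act k g x = action of g \in C_1 on x \in C_k  (k >= 2). *)
Record RawRCC := mkRawRCC {
  grp : nat -> RawGrp;
  bd : forall k, grp (S k) -> grp k;
  act : forall k, grp 1 -> grp k -> grp k }.

Definition is_RCC (n : nat) (C : RawRCC) : Prop :=
  (forall k, 1 <= k <= n -> is_group (grp C k)) /\
  (forall k, 1 <= k < n -> is_hom (bd C k)) /\
  (forall k, 2 <= k <= n -> forall g, is_hom (act C k g)) /\
  (forall k, 2 <= k <= n -> forall x, act C k gone x = x) /\
  (forall k, 2 <= k <= n -> forall g h x,
      act C k (gmul g h) x = act C k g (act C k h x)) /\
  (forall g x, bd C 1 (act C 2 g x) = gmul (gmul g (bd C 1 x)) (ginv g)) /\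
  (forall x y, act C 2 (bd C 1 x) y = gmul (gmul x y) (ginv x)) /\
  (forall k, 3 <= k <= n -> is_abelian (grp C k)) /\
  (forall k, 2 <= k < n -> forall g x,
      bd C k (act C (S k) g x) = act C k g (bd C k x)) /\
  (forall k, 1 <= k -> S k < n -> forall x, bd C k (bd C (S k) x) = gone) /\
  (forall k, 3 <= k <= n -> forall y x, act C k (bd C 1 y) x = x).

Definition RCCmap (C D : RawRCC) : Type := forall k, grp C k -> grp D k.

Definition is_morphism (n : nat) (C D : RawRCC) (f : RCCmap C D) : Prop :=
  (forall k, 1 <= k <= n -> is_hom (f k)) /\
  (forall k, 1 <= k < n -> forall x, f k (bd C k x) = bd D k (f (S k) x)) /\
  (forall k, 2 <= k <= n -> forall g x, f k (act C k g x) = act D k (f 1 g) (f k x)).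

(* cycles: ker ∂_k (all of C_1 for k = 1) *)

Definition ker_pred (C : RawRCC) (k : nat) : grp C k -> Prop :=
  match k as k0 return grp C k0 -> Prop with
  | O => fun _ => True
  | S k' => fun x => match k' with O => True | S _ => bd C k' x = gone end
  end.

(* boundaries: ∂_(k+1)(C_(k+1)) for k < n, trivial subgroup for k = n *)
Definition im_pred (n : nat) (C : RawRCC) (k : nat) (x : grp C k) : Prop :=
  if k <? n then exists y, bd C k y = x else x = gone.

(* f induces a bijection (= group isomorphism) on π_k for all 1 <= k <= n,
   where π_k = ker_pred / im_pred *)
Definition weak_equivalence (n : nat) (C D : RawRCC) (f : RCCmap C D) : Prop :=
  forall k, 1 <= k <= n ->
    (forall y : grp D k, ker_pred D k y ->
        exists x : grp C k, ker_pred C k x /\ im_pred n D k (gmul (f k x) (ginv y))) /\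
    (forall x x' : grp C k, ker_pred C k x -> ker_pred C k x' ->
        im_pred n D k (gmul (f k x) (ginv (f k x'))) -> im_pred n C k (gmul x (ginv x'))).

Definition fibration (n : nat) (C D : RawRCC) (f : RCCmap C D) : Prop :=
  forall k, 1 <= k <= n -> forall y : grp D k, exists x, f k x = y.


Definition trivial_fibration (n : nat) (C D : RawRCC) (f : RCCmap C D) : Prop :=
  fibration n C D f /\ weak_equivalence n C D f.


Definition prodRCC (C D : RawRCC) : RawRCC :=
  @mkRawRCC (fun k => prodGrp (grp C k) (grp D k))
    (fun k x => (bd C k (fst x), bd D k (snd x)))
    (fun k g x => (act C k (fst g) (fst x), act D k (snd g) (snd x))).

Definition pairM (Q C D : RawRCC) (p : RCCmap Q C) (f : RCCmap Q D)
  : RCCmap Q (prodRCC C D) := fun k x => (p k x, f k x).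

Definition proj1M (C D : RawRCC) : RCCmap (prodRCC C D) C := fun k x => fst x.

Definition compM (A B C : RawRCC) (g : RCCmap B C) (f : RCCmap A B) : RCCmap A C :=
  fun k x => g k (f k x).

Section Pushout.
Variables (n : nat) (Q K : RawRCC) (nab : RCCmap Q K).

(* action of Q_k on K_(k+1) used in the semidirect product at degree k = n-1:
   via ∇_1 ∘ ξ_2 when k = 2 (i.e. n = 3), trivial otherwise (n >= 4) *)
Definition po_phi (k : nat) : grp Q k -> grp K (S k) -> grp K (S k) :=
  match k as k0 return grp Q k0 -> grp K (S k0) -> grp K (S k0) with
  | 2 => fun a c => act K 3 (nab 1 (bd Q 1 a)) c
  | _ => fun _ c => c
  end.

Definition po_semi (k : nat) : RawGrp := semidirect (grp Q k) (grp K (S k)) (po_phi k).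

Definition po_N (k : nat) (z : po_semi k) : Prop :=
  exists x : grp Q (S k), z = (ginv (bd Q k x), nab (S k) x).

(* P = Q_(k) x^{Q_(k+1)} K_(k+1) ,  used for k = n-1 *)
Definition po_P (k : nat) : RawGrp := quotGrp (po_semi k) (po_N k).

Inductive postag := Below | Penult | Top | Above.

Definition pos (k : nat) : postag :=
  if k <? n - 1 then Below
  else if k =? n - 1 then Penult
  else if k =? n then Top
  else Above.

Definition grp_of (t : postag) (k : nat) : RawGrp :=
  match t with
  | Below => grp Q k
  | Penult => po_P k
  | Top => grp K k
  | Above => grp Q k
  end.

Definition po_grp (k : nat) : RawGrp := grp_of (pos k) k.

Definition po_bd (k : nat) : po_grp (S k) -> po_grp k :=
  match pos (S k) as t1 return grp_of t1 (S k) -> po_grp k with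
  | Top =>
      match pos k as t2 return grp K (S k) -> grp_of t2 k with
      | Penult => fun c => qclass (po_N k) (gone, c)
      | _ => fun _ => gone
      end
  | Penult =>
      match pos k as t2 return po_P (S k) -> grp_of t2 k with
      | Below => fun z => bd Q k (fst (qrep z))
      | _ => fun _ => gone
      end
  | Below =>
      match pos k as t2 return grp Q (S k) -> grp_of t2 k with
      | Below => fun x => bd Q k x
      | _ => fun _ => gone
      end
  | Above =>
      match pos k as t2 return grp Q (S k) -> grp_of t2 k with
      | Above => fun x => bd Q k x
      | _ => fun _ => gone
      end
  end.

(* view an element of the degree-1 group (which is Q_1 since n >= 3) in Q_1 *)
Definition po_toQ1 : po_grp 1 -> grp Q 1 :=
  match pos 1 as t return grp_of t 1 -> grp Q 1 with
  | Below => fun g => g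
  | Above => fun g => g
  | Penult => fun z => fst (qrep z)
  | Top => fun _ => gone
  end.

Definition po_act (k : nat) (g : po_grp 1) : po_grp k -> po_grp k :=
  let g' := po_toQ1 g in
  match pos k as t return grp_of t k -> grp_of t k with
  | Below => act Q k g'
  | Above => act Q k g'
  | Top => act K k (nab 1 g')
  | Penult => fun z =>
      qclass (po_N k) (act Q k g' (fst (qrep z)), act K (S k) (nab 1 g') (snd (qrep z)))
  end.

Definition pushout : RawRCC := @mkRawRCC po_grp po_bd po_act.

Definition po_rho : RCCmap pushout K := fun k =>
  match pos k as t return grp_of t k -> grp K k with
  | Below => nab k
  | Above => nab k
  | Top => fun c => c
  | Penult => fun z => gmul (nab k (fst (qrep z))) (bd K k (snd (qrep z)))
  end.

End Pushout.

(* Below degree n-1 the pushout is Q itself and the composite is p.  In degree n-1 the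
   semidirect action is trivial and boundaries are central, so P is the quotient of
   Q_(n-1) x K_n by {(xi x^-1, nabla x)}; the class [a,c] is sent to p(a) d(q c), which differs
   from p(a) by a boundary, and [a,c] [a',c']^-1 is a boundary [1, c c'^-1 nabla w] as soon as
   a a'^-1 = xi(w).  So on pi_(n-1) the composite is p.  In degree n the cycles of K_n are the
   nabla-images of cycles of Q_n, where the composite is again p.  Of the projection
   q : H x G -> H only that it is a fibration with q o nabla = p is used. *)

From Stdlib Require Import Arith Lia ClassicalEpsilon FunctionalExtensionality
  PropExtensionality ProofIrrelevance.

Arguments pos : simpl never.
Arguments po_P : simpl never.
Arguments po_semi : simpl never.
Arguments qclass : simpl never.

Section GroupFacts.
Context {G : RawGrp} (HG : is_group G).

Lemma mulgA (x y z : G) : gmul x (gmul y z) = gmul (gmul x y) z. Proof. apply HG. Qed.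
Lemma mul1g (x : G) : gmul gone x = x. Proof. apply HG. Qed.
Lemma mulg1 (x : G) : gmul x gone = x. Proof. apply HG. Qed.
Lemma mulVg (x : G) : gmul (ginv x) x = gone. Proof. apply HG. Qed.
Lemma mulgV (x : G) : gmul x (ginv x) = gone. Proof. apply HG. Qed.

Lemma mulKg (x y : G) : gmul (ginv x) (gmul x y) = y.
Proof. rewrite mulgA, mulVg, mul1g. reflexivity. Qed.

Lemma mulKVg (x y : G) : gmul x (gmul (ginv x) y) = y.
Proof. rewrite mulgA, mulgV, mul1g. reflexivity. Qed.

Lemma mulgI (a x y : G) : gmul a x = gmul a y -> x = y.
Proof. intro E. rewrite <- (mulKg a x), <- (mulKg a y), E. reflexivity. Qed.

Lemma mulIg (a x y : G) : gmul x a = gmul y a -> x = y.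
Proof.
  intro E. rewrite <- (mulg1 x), <- (mulg1 y), <- (mulgV a), !mulgA, E. reflexivity.
Qed.

Lemma invg_unique (x y : G) : gmul x y = gone -> y = ginv x.
Proof. intro E. apply (mulgI x). rewrite E, mulgV. reflexivity. Qed.

Lemma invMg (x y : G) : ginv (gmul x y) = gmul (ginv y) (ginv x).
Proof.
  symmetry. apply invg_unique. rewrite <- mulgA, (mulgA y), mulgV, mul1g, mulgV. reflexivity.
Qed.

Lemma invgK (x : G) : ginv (ginv x) = x.
Proof. symmetry. apply invg_unique, mulVg. Qed.

Lemma invg1 : ginv (@gone G) = gone.
Proof. symmetry. apply invg_unique, mul1g. Qed.

Lemma mul_central_div (x y u u' : G) :
  (forall z, gmul u z = gmul z u) -> (forall z, gmul u' z = gmul z u') ->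
  gmul (gmul x u) (ginv (gmul y u')) = gmul (gmul x (ginv y)) (gmul u (ginv u')).
Proof.
  intros Hu Hu'.
  assert (HVu' : forall z, gmul (ginv u') z = gmul z (ginv u')).
  { intro z. apply (mulgI u'). rewrite mulKVg, mulgA, Hu', <- mulgA, mulgV, mulg1. reflexivity. }
  rewrite invMg, <- !mulgA. f_equal.
  rewrite (HVu' (ginv y)), mulgA, Hu, <- mulgA. reflexivity.
Qed.

End GroupFacts.

Section Homomorphisms.
Context {G H : RawGrp} (HG : is_group G) (HH : is_group H) (f : G -> H) (Hf : is_hom f).

Lemma hom_one : f gone = gone.
Proof. apply (mulgI HH (f gone)). rewrite <- Hf, (mul1g HG), (mulg1 HH). reflexivity. Qed.

Lemma hom_inv x : f (ginv x) = ginv (f x).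
Proof. apply (invg_unique HH). rewrite <- Hf, (mulgV HG). exact hom_one. Qed.

End Homomorphisms.

Lemma sig_eq {A} {P : A -> Prop} (a b : sig P) : proj1_sig a = proj1_sig b -> a = b.
Proof. destruct a, b; simpl; intros ->; f_equal; apply proof_irrelevance. Qed.

Section Quotient.
Context {G : RawGrp} (HG : is_group G) (N : G -> Prop)
  (N1 : N gone) (NM : forall x y, N x -> N y -> N (gmul x y))
  (NV : forall x, N x -> N (ginv x))
  (Nconj : forall g x, N x -> N (gmul (gmul g x) (ginv g))).

Lemma qclass_eq (x y : G) : N (gmul (ginv x) y) -> qclass N x = qclass N y.
Proof.
  intro Hxy. apply sig_eq. simpl. extensionality z. apply propositional_extensionality.
  unfold qcls. split; intro Hz.
  - replace (gmul (ginv y) z) with (gmul (ginv (gmul (ginv x) y)) (gmul (ginv x) z)).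
    + apply NM; auto.
    + rewrite (invMg HG), (invgK HG), <- (mulgA HG), (mulKVg HG). reflexivity.
  - replace (gmul (ginv x) z) with (gmul (gmul (ginv x) y) (gmul (ginv y) z)).
    + apply NM; auto.
    + rewrite <- (mulgA HG), (mulKVg HG). reflexivity.
Qed.

Lemma qclass_eq_rel (x y : G) : qclass N x = qclass N y -> N (gmul (ginv x) y).
Proof.
  intro E. apply (f_equal (@proj1_sig _ _)) in E. simpl in E.
  change (qcls N x y). rewrite E. unfold qcls. rewrite (mulVg HG). exact N1.
Qed.

Lemma qclass_qrep (P : qcarrier N) : qclass N (qrep P) = P.
Proof.
  apply sig_eq. unfold qrep. simpl.
  destruct (constructive_indefinite_description _ _). simpl. symmetry. exact e.
Qed.

Lemma qclass_surj (P : qcarrier N) : exists a, P = qclass N a.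
Proof. exists (qrep P). symmetry. apply qclass_qrep. Qed.

Lemma qrep_qclass (x : G) : exists m, N m /\ qrep (qclass N x) = gmul x m.
Proof.
  exists (gmul (ginv x) (qrep (qclass N x))). split.
  - apply qclass_eq_rel. rewrite qclass_qrep. reflexivity.
  - rewrite (mulKVg HG). reflexivity.
Qed.

Lemma qmul_qclass (x y : G) :
  gmul (r := quotGrp G N) (qclass N x) (qclass N y) = qclass N (gmul x y).
Proof.
  simpl. destruct (qrep_qclass x) as [m1 [N1m ->]]. destruct (qrep_qclass y) as [m2 [N2m ->]].
  symmetry. apply qclass_eq.
  rewrite (invMg HG), <- !(mulgA HG), (mulKg HG).
  replace (gmul (ginv y) (gmul m1 (gmul y m2))) with
    (gmul (gmul (gmul (ginv y) m1) (ginv (ginv y))) m2).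
  - apply NM; auto.
  - rewrite (invgK HG), <- !(mulgA HG). reflexivity.
Qed.

Lemma qinv_qclass (x : G) :
  ginv (r := quotGrp G N) (qclass N x) = qclass N (ginv x).
Proof.
  simpl. destruct (qrep_qclass x) as [m [Nm ->]].
  apply qclass_eq. rewrite !(invMg HG), !(invgK HG). apply Nconj, Nm.
Qed.

Lemma quotGrp_group : is_group (quotGrp G N).
Proof.
  repeat split; intros x;
    [intros y z; destruct (qclass_surj y) as [b ->]; destruct (qclass_surj z) as [c ->] | ..];
    destruct (qclass_surj x) as [a ->]; change (@gone (quotGrp G N)) with (qclass N gone);
    rewrite ?qinv_qclass, !qmul_qclass.
  - rewrite (mulgA HG). reflexivity.
  - rewrite (mul1g HG). reflexivity.
  - rewrite (mulg1 HG). reflexivity.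
  - rewrite (mulVg HG). reflexivity.
  - rewrite (mulgV HG). reflexivity.
Qed.

End Quotient.

Ltac split_and := repeat match goal with |- _ /\ _ => split end.

Section RCCFacts.
Context {n : nat} {C : RawRCC} (HC : is_RCC n C).

Lemma rcc_group k : 1 <= k <= n -> is_group (grp C k). Proof. apply HC. Qed.
Lemma rcc_bd_hom k : 1 <= k < n -> is_hom (bd C k). Proof. apply HC. Qed.
Lemma rcc_act_hom k : 2 <= k <= n -> forall g, is_hom (act C k g). Proof. apply HC. Qed.
Lemma rcc_act1 k : 2 <= k <= n -> forall x, act C k gone x = x. Proof. apply HC. Qed.
Lemma rcc_actM k : 2 <= k <= n -> forall g h x, act C k (gmul g h) x = act C k g (act C k h x).
Proof. apply HC. Qed.
Lemma rcc_bd_act : forall g x, bd C 1 (act C 2 g x) = gmul (gmul g (bd C 1 x)) (ginv g).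
Proof. apply HC. Qed.
Lemma rcc_act_bd : forall x y, act C 2 (bd C 1 x) y = gmul (gmul x y) (ginv x).
Proof. apply HC. Qed.
Lemma rcc_abelian k : 3 <= k <= n -> is_abelian (grp C k). Proof. apply HC. Qed.
Lemma rcc_bd_equivariant k : 2 <= k < n ->
  forall g x, bd C k (act C (S k) g x) = act C k g (bd C k x).
Proof. apply HC. Qed.
Lemma rcc_bdbd k : 1 <= k -> S k < n -> forall x, bd C k (bd C (S k) x) = gone.
Proof. apply HC. Qed.
Lemma rcc_act_bd_trivial k : 3 <= k <= n -> forall y x, act C k (bd C 1 y) x = x.
Proof. apply HC. Qed.

Lemma rcc_act_inv k : 2 <= k <= n -> forall g x, act C k g (ginv x) = ginv (act C k g x).
Proof.
  intros Hk g. apply (hom_inv (rcc_group k ltac:(lia)) (rcc_group k ltac:(lia))), rcc_act_hom, Hk.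
Qed.

Lemma rcc_act_one k : 2 <= k <= n -> forall g, act C k g gone = gone.
Proof.
  intros Hk g. apply (hom_one (rcc_group k ltac:(lia)) (rcc_group k ltac:(lia))), rcc_act_hom, Hk.
Qed.

(* In degree 2 this is the Peiffer identity applied to a boundary, whose own boundary is 1. *)
Lemma rcc_bd_central j : 2 <= j < n ->
  forall (y : grp C (S j)) (z : grp C j), gmul (bd C j y) z = gmul z (bd C j y).
Proof.
  intros Hj y z.
  destruct (Nat.eq_dec j 2) as [->|Hj3]; [|apply rcc_abelian; lia].
  assert (G2 := rcc_group 2 ltac:(lia)).
  pose proof (rcc_act_bd (bd C 2 y) z) as E.
  rewrite (rcc_bdbd 1 ltac:(lia) ltac:(lia)), (rcc_act1 2 ltac:(lia)) in E.
  apply (mulIg G2 (ginv (bd C 2 y))). rewrite <- E, <- (mulgA G2), (mulgV G2), (mulg1 G2).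
  reflexivity.
Qed.

End RCCFacts.

Section MorphismFacts.
Context {n : nat} {C D : RawRCC} {f : RCCmap C D} (Hf : is_morphism n C D f).

Lemma morph_hom k : 1 <= k <= n -> is_hom (f k). Proof. apply Hf. Qed.
Lemma morph_bd k : 1 <= k < n -> forall x, f k (bd C k x) = bd D k (f (S k) x).
Proof. apply Hf. Qed.
Lemma morph_act k : 2 <= k <= n -> forall g x, f k (act C k g x) = act D k (f 1 g) (f k x).
Proof. apply Hf. Qed.

End MorphismFacts.

Lemma compM_morphism n A B C (f : RCCmap A B) (g : RCCmap B C) :
  is_morphism n A B f -> is_morphism n B C g -> is_morphism n A C (compM A B C g f).
Proof.
  intros Hf Hg. unfold is_morphism, compM. split_and.
  - intros k Hk x y. rewrite (morph_hom Hf k Hk), (morph_hom Hg k Hk). reflexivity.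
  - intros k Hk x. rewrite (morph_bd Hf k Hk), (morph_bd Hg k Hk). reflexivity.
  - intros k Hk a x. rewrite (morph_act Hf k Hk), (morph_act Hg k Hk). reflexivity.
Qed.

Lemma prodGrp_group (A B : RawGrp) : is_group A -> is_group B -> is_group (prodGrp A B).
Proof.
  intros HA HB. unfold is_group. split_and; simpl.
  - intros [] [] []; simpl. rewrite (mulgA HA), (mulgA HB). reflexivity.
  - intros []; simpl. rewrite (mul1g HA), (mul1g HB). reflexivity.
  - intros []; simpl. rewrite (mulg1 HA), (mulg1 HB). reflexivity.
  - intros []; simpl. rewrite (mulVg HA), (mulVg HB). reflexivity.
  - intros []; simpl. rewrite (mulgV HA), (mulgV HB). reflexivity.
Qed.

Lemma prodRCC_RCC n C D : is_RCC n C -> is_RCC n D -> is_RCC n (prodRCC C D).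
Proof.
  intros HC HD. unfold is_RCC. split_and; simpl.
  - intros k Hk. apply prodGrp_group; [apply (rcc_group HC) | apply (rcc_group HD)]; exact Hk.
  - intros k Hk [] []; simpl. rewrite (rcc_bd_hom HC k Hk), (rcc_bd_hom HD k Hk). reflexivity.
  - intros k Hk [] [] []; simpl.
    rewrite (rcc_act_hom HC k Hk), (rcc_act_hom HD k Hk). reflexivity.
  - intros k Hk []; simpl. rewrite (rcc_act1 HC k Hk), (rcc_act1 HD k Hk). reflexivity.
  - intros k Hk [] [] []; simpl. rewrite (rcc_actM HC k Hk), (rcc_actM HD k Hk). reflexivity.
  - intros [] []; simpl. rewrite (rcc_bd_act HC), (rcc_bd_act HD). reflexivity.
  - intros [] []; simpl. rewrite (rcc_act_bd HC), (rcc_act_bd HD). reflexivity.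
  - intros k Hk [] []; simpl. rewrite (rcc_abelian HC k Hk), (rcc_abelian HD k Hk). reflexivity.
  - intros k Hk [] []; simpl.
    rewrite (rcc_bd_equivariant HC k Hk), (rcc_bd_equivariant HD k Hk). reflexivity.
  - intros k Hk1 Hk2 []; simpl.
    rewrite (rcc_bdbd HC k Hk1 Hk2), (rcc_bdbd HD k Hk1 Hk2). reflexivity.
  - intros k Hk [] []; simpl.
    rewrite (rcc_act_bd_trivial HC k Hk), (rcc_act_bd_trivial HD k Hk). reflexivity.
Qed.

Lemma pairM_morphism n Q C D p f : is_morphism n Q C p -> is_morphism n Q D f ->
  is_morphism n Q (prodRCC C D) (pairM Q C D p f).
Proof.
  intros Hp Hf. unfold is_morphism, pairM. split_and; simpl.
  - intros k Hk x y. rewrite (morph_hom Hp k Hk), (morph_hom Hf k Hk). reflexivity.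
  - intros k Hk x. rewrite (morph_bd Hp k Hk), (morph_bd Hf k Hk). reflexivity.
  - intros k Hk a x. rewrite (morph_act Hp k Hk), (morph_act Hf k Hk). reflexivity.
Qed.

Lemma proj1M_morphism n C D : is_morphism n (prodRCC C D) C (proj1M C D).
Proof. repeat split. Qed.

Lemma proj1M_fibration n C D : fibration n (prodRCC C D) C (proj1M C D).
Proof. intros k _ y. exists (y, gone). reflexivity. Qed.

Definition homotopy_bij {C D : RawGrp} (cycC bndC : C -> Prop) (cycD bndD : D -> Prop)
    (f : C -> D) : Prop :=
  (forall y, cycD y -> exists x, cycC x /\ bndD (gmul (f x) (ginv y))) /\
  (forall x x', cycC x -> cycC x' -> bndD (gmul (f x) (ginv (f x'))) -> bndC (gmul x (ginv x'))).

Lemma weak_equivalence_homotopy_bij n C D f : weak_equivalence n C D f <->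
  forall k, 1 <= k <= n ->
    homotopy_bij (ker_pred C k) (im_pred n C k) (ker_pred D k) (im_pred n D k) (f k).
Proof. reflexivity. Qed.

Lemma homotopy_bij_eq_map {C D : RawGrp} (cycC bndC : C -> Prop) (cycD bndD : D -> Prop)
    (f f' : C -> D) :
  (forall x, f x = f' x) -> homotopy_bij cycC bndC cycD bndD f -> homotopy_bij cycC bndC cycD bndD f'.
Proof.
  intros Eff' [Hsurj Hinj]. split.
  - intros y Hy. destruct (Hsurj y Hy) as (x & Hx & Hb). exists x. rewrite <- Eff'. auto.
  - intros x x'. rewrite <- !Eff'. apply Hinj.
Qed.

Lemma homotopy_bij_boundaries {C D : RawGrp} (cycC bndC bndC' : C -> Prop)
    (cycD bndD : D -> Prop) f :
  (forall x, bndC x -> bndC' x) ->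
  homotopy_bij cycC bndC cycD bndD f -> homotopy_bij cycC bndC' cycD bndD f.
Proof. intros Hbnd [Hsurj Hinj]. split; [exact Hsurj | intros; apply Hbnd; auto]. Qed.

Lemma im_pred_lt n C k : k < n -> im_pred n C k = fun x => exists y, bd C k y = x.
Proof. intro Hk. unfold im_pred. rewrite (proj2 (Nat.ltb_lt k n) Hk). reflexivity. Qed.

Lemma im_pred_top n C k : k = n -> im_pred n C k = fun x => x = gone.
Proof. intros ->. unfold im_pred. rewrite Nat.ltb_irrefl. reflexivity. Qed.

Lemma pos_lt_Below n k : k < n - 1 -> pos n k = Below.
Proof. intro Hk. unfold pos. rewrite (proj2 (Nat.ltb_lt _ _) Hk). reflexivity. Qed.

Lemma pos_Below_lt n k : pos n k = Below -> k < n - 1.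
Proof.
  unfold pos. destruct (Nat.ltb_spec k (n - 1)); [auto|].
  destruct (k =? n - 1), (k =? n); discriminate.
Qed.

Lemma pos_Penult_eq n k : pos n k = Penult -> k = n - 1.
Proof.
  unfold pos. destruct (k <? n - 1); [discriminate|].
  destruct (Nat.eqb_spec k (n - 1)); [auto|]. destruct (k =? n); discriminate.
Qed.

Lemma pos_Top_eq n k : pos n k = Top -> k = n.
Proof.
  unfold pos. destruct (k <? n - 1), (k =? n - 1); try discriminate.
  destruct (Nat.eqb_spec k n); [auto | discriminate].
Qed.

Lemma pos_Above_gt n k : pos n k = Above -> n < k.
Proof.
  unfold pos.
  destruct (Nat.ltb_spec k (n - 1)), (Nat.eqb_spec k (n - 1)), (Nat.eqb_spec k n);
    try discriminate; lia.
Qed.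

Ltac case_pos n k :=
  let E := fresh "Epos" in
  destruct (pos n k) eqn:E;
  [apply pos_Below_lt in E | apply pos_Penult_eq in E
  | apply pos_Top_eq in E | apply pos_Above_gt in E].

Section Pushout.
Context (n : nat) (Q K : RawRCC) (nab : RCCmap Q K)
  (Hn : 3 <= n) (HQ : is_RCC n Q) (HK : is_RCC n K) (Hnab : is_morphism n Q K nab).

(* For n = 3 the action goes through a boundary of Q_2, which acts trivially on K_3. *)
Lemma po_phi_trivial k a c : po_phi Q K nab k a c = c.
Proof.
  destruct k as [|[|[|k]]]; try reflexivity. simpl.
  rewrite (morph_bd Hnab 1 ltac:(lia)), (rcc_act_bd_trivial HK 3 ltac:(lia)). reflexivity.
Qed.

Lemma po_semi_mulE k (x y : po_semi Q K nab k) :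
  gmul x y = (gmul (fst x) (fst y), gmul (snd x) (snd y)).
Proof. destruct x, y. unfold po_semi, semidirect. simpl. rewrite po_phi_trivial. reflexivity. Qed.

Lemma po_semi_invE k (x : po_semi Q K nab k) : ginv x = (ginv (fst x), ginv (snd x)).
Proof. destruct x. unfold po_semi, semidirect. simpl. rewrite po_phi_trivial. reflexivity. Qed.

Lemma po_P_surj k (z : po_P Q K nab k) : exists a c, z = qclass (po_N Q K nab k) (a, c).
Proof. destruct (qclass_surj _ z) as [[a c] ->]. exists a, c. reflexivity. Qed.

Section PenultimateGroup.
Variable j : nat.
Hypothesis Hj : j = n - 1.

Let GQ : is_group (grp Q j). Proof. apply (rcc_group HQ); lia. Qed.
Let GQ' : is_group (grp Q (S j)). Proof. apply (rcc_group HQ); lia. Qed.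
Let GK : is_group (grp K j). Proof. apply (rcc_group HK); lia. Qed.
Let GK' : is_group (grp K (S j)). Proof. apply (rcc_group HK); lia. Qed.
Let bd_hom : is_hom (bd Q j). Proof. apply (rcc_bd_hom HQ); lia. Qed.
Let nab_hom : is_hom (nab (S j)). Proof. apply (morph_hom Hnab); lia. Qed.
Let NN := po_N Q K nab j.

Lemma po_semi_group : is_group (po_semi Q K nab j).
Proof.
  unfold is_group. split_and.
  - intros [] [] []. rewrite !po_semi_mulE. simpl. rewrite (mulgA GQ), (mulgA GK'). reflexivity.
  - intros []. rewrite !po_semi_mulE. simpl. rewrite (mul1g GQ), (mul1g GK'). reflexivity.
  - intros []. rewrite !po_semi_mulE. simpl. rewrite (mulg1 GQ), (mulg1 GK'). reflexivity.
  - intros []. rewrite po_semi_mulE, po_semi_invE. simpl.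
    rewrite (mulVg GQ), (mulVg GK'). reflexivity.
  - intros []. rewrite po_semi_mulE, po_semi_invE. simpl.
    rewrite (mulgV GQ), (mulgV GK'). reflexivity.
Qed.

Lemma po_N1 : NN gone.
Proof.
  exists gone. rewrite (hom_one GQ' GQ _ bd_hom), (invg1 GQ), (hom_one GQ' GK' _ nab_hom).
  reflexivity.
Qed.

Lemma po_NM x y : NN x -> NN y -> NN (gmul x y).
Proof.
  intros [u ->] [v ->]. exists (gmul v u). rewrite po_semi_mulE. simpl.
  rewrite bd_hom, nab_hom, (invMg GQ), (rcc_abelian HK (S j) ltac:(lia) (nab (S j) v)).
  reflexivity.
Qed.

Lemma po_NV x : NN x -> NN (ginv x).
Proof.
  intros [u ->]. exists (ginv u). rewrite po_semi_invE. simpl.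
  rewrite (hom_inv GQ' GQ _ bd_hom), (hom_inv GQ' GK' _ nab_hom). reflexivity.
Qed.

(* Boundaries of Q_n are central in Q_(n-1) and K_n is abelian. *)
Lemma po_Nconj g x : NN x -> NN (gmul (gmul g x) (ginv g)).
Proof.
  intros [u ->]. exists u. rewrite !po_semi_mulE, po_semi_invE. simpl.
  rewrite <- (hom_inv GQ' GQ _ bd_hom), <- (rcc_bd_central HQ j ltac:(lia) (ginv u) (fst g)).
  rewrite <- (mulgA GQ), (mulgV GQ), (mulg1 GQ).
  rewrite (rcc_abelian HK (S j) ltac:(lia) (snd g) (nab (S j) u)).
  rewrite <- (mulgA GK'), (mulgV GK'), (mulg1 GK'). reflexivity.
Qed.

Lemma po_P_group : is_group (po_P Q K nab j).
Proof. exact (quotGrp_group po_semi_group NN po_N1 po_NM po_NV po_Nconj). Qed.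

Lemma po_P_mul a c a' c' :
  gmul (r := po_P Q K nab j) (qclass NN (a, c)) (qclass NN (a', c')) =
  qclass NN (gmul a a', gmul c c').
Proof.
  unfold po_P. rewrite (qmul_qclass po_semi_group NN po_N1 po_NM po_NV po_Nconj), po_semi_mulE.
  reflexivity.
Qed.

Lemma po_P_inv a c :
  ginv (r := po_P Q K nab j) (qclass NN (a, c)) = qclass NN (ginv a, ginv c).
Proof.
  unfold po_P. rewrite (qinv_qclass po_semi_group NN po_N1 po_NM po_NV po_Nconj), po_semi_invE.
  reflexivity.
Qed.

Lemma qrep_po_P a c : exists x,
  qrep (qclass NN (a, c)) = (gmul a (ginv (bd Q j x)), gmul c (nab (S j) x)).
Proof.
  destruct (qrep_qclass po_semi_group NN po_N1 (a, c)) as [m [[x ->] E]].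
  exists x. rewrite E, po_semi_mulE. reflexivity.
Qed.

Lemma po_P_shift a c x :
  qclass NN (gmul a (ginv (bd Q j x)), gmul c (nab (S j) x)) = qclass NN (a, c).
Proof.
  symmetry. apply (qclass_eq po_semi_group NN po_NM po_NV).
  rewrite po_semi_mulE, po_semi_invE. simpl. rewrite (mulKg GQ), (mulKg GK'). exists x.
  reflexivity.
Qed.

Lemma po_P_eq_inv a c a' c' : qclass NN (a, c) = qclass NN (a', c') ->
  exists x, a' = gmul a (ginv (bd Q j x)) /\ c' = gmul c (nab (S j) x).
Proof.
  intro E. apply (qclass_eq_rel po_semi_group NN po_N1) in E.
  rewrite po_semi_mulE, po_semi_invE in E. simpl in E. destruct E as [x E].
  injection E as E1 E2. exists x. split.
  - rewrite <- E1, (mulKVg GQ). reflexivity.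
  - rewrite <- E2, (mulKVg GK'). reflexivity.
Qed.

Lemma po_P_trivial c : qclass NN (gone, c) = @gone (po_P Q K nab j) ->
  exists x, bd Q j x = gone /\ c = nab (S j) x.
Proof.
  intro E. symmetry in E. apply po_P_eq_inv in E as (x & E1 & E2).
  exists x. rewrite (mul1g GQ) in E1. rewrite (mul1g GK') in E2. split; [|exact E2].
  rewrite <- (invgK GQ (bd Q j x)), <- E1. apply (invg1 GQ).
Qed.

Lemma po_rho_qrep a c :
  gmul (nab j (fst (qrep (qclass NN (a, c))))) (bd K j (snd (qrep (qclass NN (a, c))))) =
  gmul (nab j a) (bd K j c).
Proof.
  destruct (qrep_po_P a c) as [x ->]. simpl.
  assert (Hbd : is_hom (bd K j)) by (apply (rcc_bd_hom HK j); lia).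
  assert (Hnabj : is_hom (nab j)) by (apply (morph_hom Hnab j); lia).
  rewrite Hnabj, Hbd, (hom_inv GQ GK _ Hnabj), (morph_bd Hnab j ltac:(lia)), <- !(mulgA GK).
  f_equal. rewrite <- (rcc_bd_central HK j ltac:(lia) (nab (S j) x) (bd K j c)), (mulKg GK).
  reflexivity.
Qed.

Lemma po_act_qrep g a c :
  qclass NN (act Q j g (fst (qrep (qclass NN (a, c)))),
             act K (S j) (nab 1 g) (snd (qrep (qclass NN (a, c))))) =
  qclass NN (act Q j g a, act K (S j) (nab 1 g) c).
Proof.
  destruct (qrep_po_P a c) as [x ->]. simpl.
  rewrite (rcc_act_hom HQ j ltac:(lia)), (rcc_act_hom HK (S j) ltac:(lia)),
    (rcc_act_inv HQ j ltac:(lia)), <- (rcc_bd_equivariant HQ j ltac:(lia)),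
    <- (morph_act Hnab (S j) ltac:(lia)).
  apply po_P_shift.
Qed.

End PenultimateGroup.

Lemma bd_qrep_po_P k (Hk : S k = n - 1) a c :
  bd Q k (fst (qrep (qclass (po_N Q K nab (S k)) (a, c)))) = bd Q k a.
Proof.
  assert (GQ := rcc_group HQ k ltac:(lia)).
  assert (Hbd := rcc_bd_hom HQ k ltac:(lia)).
  destruct (qrep_po_P (S k) Hk a c) as [x ->]. simpl.
  rewrite Hbd, (hom_inv (rcc_group HQ (S k) ltac:(lia)) GQ _ Hbd),
    (rcc_bdbd HQ k ltac:(lia) ltac:(lia)), (invg1 GQ), (mulg1 GQ).
  reflexivity.
Qed.

Let GQ1 : is_group (grp Q 1). Proof. apply (rcc_group HQ); lia. Qed.
Let GK1 : is_group (grp K 1). Proof. apply (rcc_group HK); lia. Qed.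
Let nab1_hom : is_hom (nab 1). Proof. apply (morph_hom Hnab); lia. Qed.

Ltac unfold_pushout :=
  unfold pushout in *; cbn [grp bd act] in *;
  unfold is_hom, po_act, po_bd, po_toQ1, po_grp, po_rho in *.

Ltac pos1_Below := rewrite (pos_lt_Below n 1 ltac:(lia)).

Lemma pushout_group k : 1 <= k <= n -> is_group (po_grp n Q K nab k).
Proof.
  intro Hk. unfold po_grp. case_pos n k; cbn [grp_of]; try lia.
  - apply (rcc_group HQ); lia.
  - apply (po_P_group k); lia.
  - apply (rcc_group HK); lia.
Qed.

Lemma pushout_bd_hom k : 1 <= k < n -> is_hom (po_bd n Q K nab k).
Proof.
  intro Hk. unfold is_hom, po_bd, po_grp.
  case_pos n (S k); case_pos n k; cbn [grp_of]; try lia.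
  - exact (rcc_bd_hom HQ k ltac:(lia)).
  - intros x y. destruct (po_P_surj (S k) x) as (a & c & ->).
    destruct (po_P_surj (S k) y) as (a' & c' & ->).
    rewrite (po_P_mul (S k) ltac:(lia)), !(bd_qrep_po_P k ltac:(lia)).
    apply (rcc_bd_hom HQ k ltac:(lia)).
  - intros x y. rewrite (po_P_mul k ltac:(lia)), (mul1g (rcc_group HQ k ltac:(lia))).
    reflexivity.
Qed.

Lemma pushout_act_hom k : 2 <= k <= n -> forall g, is_hom (po_act n Q K nab k g).
Proof.
  intro Hk. unfold_pushout. pos1_Below. case_pos n k; cbn [grp_of]; try lia; intro g.
  - exact (rcc_act_hom HQ k ltac:(lia) g).
  - intros x y. destruct (po_P_surj k x) as (a & c & ->).
    destruct (po_P_surj k y) as (a' & c' & ->).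
    rewrite (po_P_mul k ltac:(lia)), !(po_act_qrep k ltac:(lia)), (po_P_mul k ltac:(lia)),
      (rcc_act_hom HQ k ltac:(lia)), (rcc_act_hom HK (S k) ltac:(lia)).
    reflexivity.
  - exact (rcc_act_hom HK k ltac:(lia) _).
Qed.

Lemma pushout_act1 k : 2 <= k <= n -> forall x, po_act n Q K nab k gone x = x.
Proof.
  intro Hk. unfold_pushout. pos1_Below. case_pos n k; cbn [grp_of]; try lia; intro x.
  - exact (rcc_act1 HQ k ltac:(lia) x).
  - destruct (po_P_surj k x) as (a & c & ->).
    rewrite (po_act_qrep k ltac:(lia)), (hom_one GQ1 GK1 _ nab1_hom),
      (rcc_act1 HQ k ltac:(lia)), (rcc_act1 HK (S k) ltac:(lia)).
    reflexivity.
  - rewrite (hom_one GQ1 GK1 _ nab1_hom). exact (rcc_act1 HK k ltac:(lia) x).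
Qed.

Lemma pushout_actM k : 2 <= k <= n -> forall g h x,
  po_act n Q K nab k (gmul g h) x = po_act n Q K nab k g (po_act n Q K nab k h x).
Proof.
  intro Hk. unfold_pushout. pos1_Below.
  case_pos n k; cbn [grp_of]; try lia; intros g h x.
  - exact (rcc_actM HQ k ltac:(lia) g h x).
  - destruct (po_P_surj k x) as (a & c & ->).
    rewrite (po_act_qrep k ltac:(lia) (gmul g h)), (po_act_qrep k ltac:(lia) h),
      (po_act_qrep k ltac:(lia) g), nab1_hom,
      (rcc_actM HQ k ltac:(lia)), (rcc_actM HK (S k) ltac:(lia)).
    reflexivity.
  - rewrite nab1_hom. exact (rcc_actM HK k ltac:(lia) _ _ x).
Qed.

Lemma pushout_bd_act : forall g x, po_bd n Q K nab 1 (po_act n Q K nab 2 g x) =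
  gmul (gmul g (po_bd n Q K nab 1 x)) (ginv g).
Proof.
  unfold_pushout. pos1_Below. case_pos n 2; cbn [grp_of]; try lia; intros g x.
  - exact (rcc_bd_act HQ g x).
  - rewrite !(bd_qrep_po_P 1 ltac:(lia)). apply (rcc_bd_act HQ).
Qed.

Lemma pushout_act_bd : forall x y, po_act n Q K nab 2 (po_bd n Q K nab 1 x) y =
  gmul (gmul x y) (ginv x).
Proof.
  assert (GK3 := rcc_group HK 3 ltac:(lia)).
  unfold_pushout. pos1_Below. case_pos n 2; cbn [grp_of]; try lia; intros x y.
  - exact (rcc_act_bd HQ x y).
  - destruct (po_P_surj 2 x) as (a & c & ->).
    destruct (po_P_surj 2 y) as (a' & c' & ->).
    rewrite (bd_qrep_po_P 1 ltac:(lia)), (po_act_qrep 2 ltac:(lia)), (po_P_inv 2 ltac:(lia)),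
      !(po_P_mul 2 ltac:(lia)), (rcc_act_bd HQ), (morph_bd Hnab 1 ltac:(lia)),
      (rcc_act_bd_trivial HK 3 ltac:(lia)), (rcc_abelian HK 3 ltac:(lia) c c'),
      <- (mulgA GK3), (mulgV GK3), (mulg1 GK3).
    reflexivity.
Qed.

Lemma pushout_abelian k : 3 <= k <= n -> is_abelian (po_grp n Q K nab k).
Proof.
  intro Hk. unfold is_abelian, po_grp. case_pos n k; cbn [grp_of]; try lia.
  - exact (rcc_abelian HQ k ltac:(lia)).
  - intros x y. destruct (po_P_surj k x) as (a & c & ->).
    destruct (po_P_surj k y) as (a' & c' & ->).
    rewrite !(po_P_mul k ltac:(lia)), (rcc_abelian HQ k ltac:(lia) a),
      (rcc_abelian HK (S k) ltac:(lia) c).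
    reflexivity.
  - exact (rcc_abelian HK k ltac:(lia)).
Qed.

Lemma pushout_bd_equivariant k : 2 <= k < n -> forall g x,
  po_bd n Q K nab k (po_act n Q K nab (S k) g x) = po_act n Q K nab k g (po_bd n Q K nab k x).
Proof.
  intro Hk. unfold_pushout. pos1_Below.
  case_pos n (S k); case_pos n k; cbn [grp_of]; try lia; intros g x.
  - exact (rcc_bd_equivariant HQ k ltac:(lia) g x).
  - destruct (po_P_surj (S k) x) as (a & c & ->).
    rewrite (po_act_qrep (S k) ltac:(lia)), !(bd_qrep_po_P k ltac:(lia)).
    apply (rcc_bd_equivariant HQ k ltac:(lia)).
  - rewrite (po_act_qrep k ltac:(lia)), (rcc_act_one HQ k ltac:(lia)). reflexivity.
Qed.

Lemma pushout_bdbd k : 1 <= k -> S k < n -> forall x,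
  po_bd n Q K nab k (po_bd n Q K nab (S k) x) = gone.
Proof.
  intros Hk1 Hk2. unfold_pushout.
  case_pos n (S (S k)); case_pos n (S k); case_pos n k; cbn [grp_of]; try lia; intros x.
  - exact (rcc_bdbd HQ k Hk1 Hk2 x).
  - exact (rcc_bdbd HQ k Hk1 Hk2 _).
  - rewrite (bd_qrep_po_P k ltac:(lia)).
    exact (hom_one (rcc_group HQ (S k) ltac:(lia)) (rcc_group HQ k ltac:(lia)) _
      (rcc_bd_hom HQ k ltac:(lia))).
Qed.

Lemma pushout_act_bd_trivial k : 3 <= k <= n -> forall y x,
  po_act n Q K nab k (po_bd n Q K nab 1 y) x = x.
Proof.
  intros Hk. unfold_pushout. pos1_Below.
  case_pos n 2; case_pos n k; cbn [grp_of]; try lia; intros y x.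
  - exact (rcc_act_bd_trivial HQ k ltac:(lia) y x).
  - destruct (po_P_surj k x) as (a & c & ->).
    rewrite (po_act_qrep k ltac:(lia)), (rcc_act_bd_trivial HQ k ltac:(lia)),
      (morph_bd Hnab 1 ltac:(lia)), (rcc_act_bd_trivial HK (S k) ltac:(lia)).
    reflexivity.
  - rewrite (morph_bd Hnab 1 ltac:(lia)). apply (rcc_act_bd_trivial HK k ltac:(lia)).
  - rewrite (morph_bd Hnab 1 ltac:(lia)). apply (rcc_act_bd_trivial HK k ltac:(lia)).
Qed.

Lemma pushout_RCC : is_RCC n (pushout n Q K nab).
Proof.
  exact (conj pushout_group (conj pushout_bd_hom (conj pushout_act_hom (conj pushout_act1
    (conj pushout_actM (conj pushout_bd_act (conj pushout_act_bd (conj pushout_abelian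
    (conj pushout_bd_equivariant (conj pushout_bdbd pushout_act_bd_trivial)))))))))).
Qed.

Lemma po_rho_hom k : 1 <= k <= n -> is_hom (po_rho n Q K nab k).
Proof.
  intro Hk. unfold_pushout. case_pos n k; cbn [grp_of]; try lia.
  - exact (morph_hom Hnab k ltac:(lia)).
  - intros x y. destruct (po_P_surj k x) as (a & c & ->).
    destruct (po_P_surj k y) as (a' & c' & ->).
    assert (GK := rcc_group HK k ltac:(lia)).
    rewrite (po_P_mul k ltac:(lia)), !(po_rho_qrep k ltac:(lia)),
      (morph_hom Hnab k ltac:(lia)), (rcc_bd_hom HK k ltac:(lia)), <- !(mulgA GK).
    f_equal. rewrite !(mulgA GK). f_equal.
    symmetry. apply (rcc_bd_central HK k ltac:(lia)).
  - intros x y. reflexivity.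
Qed.

Lemma po_rho_bd k : 1 <= k < n -> forall x,
  po_rho n Q K nab k (po_bd n Q K nab k x) = bd K k (po_rho n Q K nab (S k) x).
Proof.
  intro Hk. unfold_pushout.
  case_pos n (S k); case_pos n k; cbn [grp_of]; try lia; intros x.
  - exact (morph_bd Hnab k Hk x).
  - rewrite (rcc_bd_hom HK k Hk), (rcc_bdbd HK k ltac:(lia) ltac:(lia)),
      (mulg1 (rcc_group HK k ltac:(lia))).
    exact (morph_bd Hnab k Hk _).
  - rewrite (po_rho_qrep k ltac:(lia)),
      (hom_one (rcc_group HQ k ltac:(lia)) (rcc_group HK k ltac:(lia)) _
        (morph_hom Hnab k ltac:(lia))).
    apply (mul1g (rcc_group HK k ltac:(lia))).
Qed.

Lemma po_rho_act k : 2 <= k <= n -> forall g x,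
  po_rho n Q K nab k (po_act n Q K nab k g x) =
  act K k (po_rho n Q K nab 1 g) (po_rho n Q K nab k x).
Proof.
  intro Hk. unfold_pushout. pos1_Below. case_pos n k; cbn [grp_of]; try lia; intros g x.
  - exact (morph_act Hnab k Hk g x).
  - destruct (po_P_surj k x) as (a & c & ->).
    rewrite (po_act_qrep k ltac:(lia)), !(po_rho_qrep k ltac:(lia)),
      (morph_act Hnab k Hk), (rcc_bd_equivariant HK k ltac:(lia)), (rcc_act_hom HK k Hk).
    reflexivity.
  - reflexivity.
Qed.

Lemma po_rho_morphism : is_morphism n (pushout n Q K nab) K (po_rho n Q K nab).
Proof. exact (conj po_rho_hom (conj po_rho_bd po_rho_act)). Qed.

Lemma po_P_boundary k (Hk : S k = n - 1) (x : grp Q k) :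
  (exists y, bd Q k y = x) -> exists z : po_P Q K nab (S k), bd Q k (fst (qrep z)) = x.
Proof.
  intros [y <-]. exists (qclass (po_N Q K nab (S k)) (y, gone)). apply bd_qrep_po_P, Hk.
Qed.

Section Composite.
Context (H : RawRCC) (p : RCCmap Q H) (q : RCCmap K H)
  (HH : is_RCC n H) (Hq : is_morphism n K H q) (Hqnab : forall k x, q k (nab k x) = p k x).

Lemma composite_po_P k (Hk : S k = n - 1) a c :
  q (S k) (gmul (nab (S k) (fst (qrep (qclass (po_N Q K nab (S k)) (a, c)))))
                (bd K (S k) (snd (qrep (qclass (po_N Q K nab (S k)) (a, c)))))) =
  gmul (p (S k) a) (bd H (S k) (q (S (S k)) c)).
Proof.
  rewrite (po_rho_qrep (S k) Hk), (morph_hom Hq (S k) ltac:(lia)), Hqnab,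
    (morph_bd Hq (S k) ltac:(lia)).
  reflexivity.
Qed.

Lemma homotopy_bij_penultimate k (Hk : S k = n - 1) :
  homotopy_bij (fun x : grp Q (S k) => bd Q k x = gone)
    (fun x => exists y : grp Q (S (S k)), bd Q (S k) y = x)
    (fun y : grp H (S k) => bd H k y = gone)
    (fun y => exists h : grp H (S (S k)), bd H (S k) h = y) (p (S k)) ->
  homotopy_bij (fun z : po_P Q K nab (S k) => bd Q k (fst (qrep z)) = gone)
    (fun z => exists c : grp K (S (S k)), qclass (po_N Q K nab (S k)) (gone, c) = z)
    (fun y : grp H (S k) => bd H k y = gone)
    (fun y => exists h : grp H (S (S k)), bd H (S k) h = y)
    (fun z => q (S k) (gmul (nab (S k) (fst (qrep z))) (bd K (S k) (snd (qrep z))))).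
Proof.
  assert (GH := rcc_group HH (S k) ltac:(lia)).
  assert (GH' := rcc_group HH (S (S k)) ltac:(lia)).
  assert (GQ := rcc_group HQ (S k) ltac:(lia)).
  assert (Hbd := rcc_bd_hom HH (S k) ltac:(lia)).
  intros [Hsurj Hinj]. split.
  - intros y Hy. destruct (Hsurj y Hy) as (a & Ha & Hb).
    exists (qclass (po_N Q K nab (S k)) (a, gone)).
    rewrite (bd_qrep_po_P k Hk), (composite_po_P k Hk),
      (hom_one (rcc_group HK (S (S k)) ltac:(lia)) GH' _ (morph_hom Hq (S (S k)) ltac:(lia))),
      (hom_one GH' GH _ Hbd), (mulg1 GH).
    exact (conj Ha Hb).
  - intros z z'. destruct (po_P_surj (S k) z) as (a & c & ->).
    destruct (po_P_surj (S k) z') as (a' & c' & ->).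
    rewrite !(bd_qrep_po_P k Hk), !(composite_po_P k Hk),
      (mul_central_div GH); try apply (rcc_bd_central HH (S k) ltac:(lia)).
    intros Ha Ha' [h Hh].
    set (u := gmul (q (S (S k)) c) (ginv (q (S (S k)) c'))).
    assert (Hpa : exists h', bd H (S k) h' = gmul (p (S k) a) (ginv (p (S k) a'))).
    { exists (gmul h (ginv u)). unfold u.
      rewrite Hbd, (hom_inv GH' GH _ Hbd), Hh, Hbd, (hom_inv GH' GH _ Hbd), <- (mulgA GH),
        (mulgV GH), (mulg1 GH).
      reflexivity. }
    destruct (Hinj a a' Ha Ha' Hpa) as (w & Hw).
    rewrite (po_P_inv (S k) Hk), (po_P_mul (S k) Hk).
    exists (gmul (gmul c (ginv c')) (nab (S (S k)) w)).
    rewrite <- (po_P_shift (S k) Hk (gmul a (ginv a')) (gmul c (ginv c')) w), <- Hw, (mulgV GQ).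
    reflexivity.
Qed.

Lemma homotopy_bij_top j (Hj : S j = n) :
  homotopy_bij (fun x : grp Q (S j) => bd Q j x = gone) (fun x => x = gone)
    (fun y : grp H (S j) => bd H j y = gone) (fun y => y = gone) (p (S j)) ->
  homotopy_bij
    (fun c : grp K (S j) => qclass (po_N Q K nab j) (gone, c) = @gone (po_P Q K nab j))
    (fun c => c = gone) (fun y : grp H (S j) => bd H j y = gone) (fun y => y = gone) (q (S j)).
Proof.
  assert (GQ := rcc_group HQ j ltac:(lia)).
  assert (GQ' := rcc_group HQ (S j) ltac:(lia)).
  assert (GK' := rcc_group HK (S j) ltac:(lia)).
  assert (Hnabh := morph_hom Hnab (S j) ltac:(lia)).
  intros [Hsurj Hinj]. split.
  - intros y Hy. destruct (Hsurj y Hy) as (x & Hx & Hpx).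
    exists (nab (S j) x). rewrite Hqnab. split; [|exact Hpx].
    pose proof (po_P_shift j ltac:(lia) gone gone x) as E.
    rewrite Hx, (invg1 GQ), (mul1g GQ), (mul1g GK') in E. exact E.
  - intros c c' Hc Hc' Hcc.
    destruct (po_P_trivial j ltac:(lia) c Hc) as (x & Hx & ->).
    destruct (po_P_trivial j ltac:(lia) c' Hc') as (x' & Hx' & ->).
    rewrite !Hqnab in Hcc.
    rewrite <- (hom_inv GQ' GK' _ Hnabh), <- Hnabh, (Hinj x x' Hx Hx' Hcc).
    apply (hom_one GQ' GK' _ Hnabh).
Qed.

Hypothesis Hp : trivial_fibration n Q H p.

Let psi := compM (pushout n Q K nab) K H q (po_rho n Q K nab).

Lemma composite_fibration : fibration n K H q -> fibration n (pushout n Q K nab) H psi.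
Proof.
  intro Hqfib. unfold fibration, psi, compM, pushout. cbn [grp]. unfold po_rho, po_grp.
  intros k Hk. case_pos n k; cbn [grp_of]; try lia; intro y.
  - destruct (proj1 Hp k Hk y) as [x <-]. exists x. apply Hqnab.
  - destruct (proj1 Hp k Hk y) as [a <-]. exists (qclass (po_N Q K nab k) (a, gone)).
    rewrite (po_rho_qrep k ltac:(lia)),
      (hom_one (rcc_group HK (S k) ltac:(lia)) (rcc_group HK k ltac:(lia)) _
        (rcc_bd_hom HK k ltac:(lia))),
      (mulg1 (rcc_group HK k ltac:(lia))).
    apply Hqnab.
  - apply Hqfib, Hk.
Qed.

Lemma composite_weak_equivalence : weak_equivalence n (pushout n Q K nab) H psi.
Proof.
  apply weak_equivalence_homotopy_bij. intros k Hk.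
  assert (Hpk := proj1 (weak_equivalence_homotopy_bij n Q H p) (proj2 Hp) k Hk).
  assert (Hpk' := homotopy_bij_eq_map _ _ _ _ _ _ (fun x => eq_sym (Hqnab k x)) Hpk).
  destruct k as [|[|k]]; [lia | |].
  - rewrite !(im_pred_lt n _ 1 ltac:(lia)) in *.
    unfold psi, compM, pushout; cbn [grp bd ker_pred] in *; unfold po_bd, po_rho, po_grp.
    pos1_Below. case_pos n 2; cbn [grp_of]; try lia.
    + exact Hpk'.
    + exact (homotopy_bij_boundaries _ _ _ _ _ _ (po_P_boundary 1 ltac:(lia)) Hpk').
  - destruct (Nat.lt_ge_cases (S (S k)) n) as [Hlt | Hge].
    + rewrite !(im_pred_lt n _ (S (S k)) Hlt) in *.
      unfold psi, compM, pushout; cbn [grp bd ker_pred] in *; unfold po_bd, po_rho, po_grp.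
      case_pos n (S (S (S k))); case_pos n (S (S k)); case_pos n (S k); cbn [grp_of]; try lia.
      * exact Hpk'.
      * exact (homotopy_bij_boundaries _ _ _ _ _ _ (po_P_boundary (S (S k)) ltac:(lia)) Hpk').
      * exact (homotopy_bij_penultimate (S k) ltac:(lia) Hpk).
    + rewrite !(im_pred_top n _ (S (S k)) ltac:(lia)) in *.
      unfold psi, compM, pushout; cbn [grp bd ker_pred] in *; unfold po_bd, po_rho, po_grp.
      case_pos n (S (S k)); case_pos n (S k); cbn [grp_of]; try lia.
      exact (homotopy_bij_top (S k) ltac:(lia) Hpk).
Qed.

End Composite.
End Pushout.

Theorem mainTheorem2 (n : nat) (Q H G : RawRCC)
  (p : RCCmap Q H) (f : RCCmap Q G) :
  3 <= n ->
  is_RCC n Q -> is_RCC n H -> is_RCC n G ->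
  is_morphism n Q H p -> trivial_fibration n Q H p ->
  is_morphism n Q G f ->
  let K := prodRCC H G in
  let nabf := pairM Q H G p f in
  let QN := pushout n Q K nabf in
  let comp := compM QN K H (proj1M H G) (po_rho n Q K nabf) in
  is_RCC n QN /\ is_morphism n QN H comp /\ trivial_fibration n QN H comp.
Proof.
  intros Hn HQ HH HG Hp Htf Hf. cbv zeta.
  assert (HK := prodRCC_RCC n H G HH HG).
  assert (Hnab := pairM_morphism n Q H G p f Hp Hf).
  assert (Hqnab : forall k x, proj1M H G k (pairM Q H G p f k x) = p k x) by reflexivity.
  split; [|split; [|split]].
  - apply pushout_RCC; assumption.
  - apply compM_morphism; [apply po_rho_morphism | apply proj1M_morphism]; assumption.
  - apply composite_fibration with (p := p); auto using proj1M_fibration.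
  - apply composite_weak_equivalence with (p := p); auto using proj1M_morphism.
Qed.
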